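(* Let $\mathfrak g$ be a finite-dimensional completely solvable Lie superalgebra over $\mathbf k$. Then every proper (graded) sub-superalgebra of $\mathfrak g$ is contained in a sub-superalgebra of $\mathfrak g$ of codimension one.
   Context: $\mathbf k$ is algebraically closed of characteristic $p>2$. A Lie superalgebra $\mathfrak g$ is completely solvable if $[\mathfrak g,\mathfrak g]$ is nilpotent. Sub-superalgebras are $\mathbb Z_2$-graded subalgebras. *)

From HB Require Import structures.
From mathcomp Require Import all_boot all_order all_algebra.
Set Implicit Arguments. Unset Strict Implicit. Unset Printing Implicit Defensive.
Import GRing.Theory.
Local Open Scope ring_scope.

(* Parity is a bool (false = even). *)
Section LieSuper.
Variables (F : fieldType) (vT : vectType F).

Definition gpart (g0 g1 : {vspace vT}) (b : bool) : {vspace vT} :=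
  if b then g1 else g0.

Definition is_lie_superalgebra (g0 g1 : {vspace vT})
    (br : vT -> vT -> vT) : Prop :=
  [/\ (g0 + g1)%VS = fullv /\ directv (g0 + g1),
      (forall (a : F) (x y z : vT), br (a *: x + y) z = a *: br x z + br y z),
      (forall (a : F) (x y z : vT), br x (a *: y + z) = a *: br x y + br x z) /\
      (forall (i j : bool) (x y : vT), x \in gpart g0 g1 i -> y \in gpart g0 g1 j ->
          br x y \in gpart g0 g1 (i (+) j)),
      (forall (i j : bool) (x y : vT), x \in gpart g0 g1 i -> y \in gpart g0 g1 j ->
          br x y = - (((-1) ^+ (i && j)) *: br y x)) /\
      (forall (i j k : bool) (x y z : vT), x \in gpart g0 g1 i ->
          y \in gpart g0 g1 j -> z \in gpart g0 g1 k ->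
          br x (br y z) = br (br x y) z + ((-1) ^+ (i && j)) *: br y (br x z))
    & (* needed for p = 3: [x,[x,x]] = 0 for odd x *) (forall x : vT, x \in g1 -> br x (br x x) = 0)].

(* [A, B] : the span of all brackets [a, b], a in A, b in B
   (by bilinearity, spanned by brackets of basis vectors). *)
Definition brs (br : vT -> vT -> vT) (A B : {vspace vT}) : {vspace vT} :=
  <<[seq br x y | x <- (vbasis A : seq vT), y <- (vbasis B : seq vT)]>>%VS.

Definition derived (br : vT -> vT -> vT) : {vspace vT} := brs br fullv fullv.

Definition lcs (br : vT -> vT -> vT) (L : {vspace vT}) (k : nat) : {vspace vT} :=
  iter k (brs br L) L.

Definition nilpotent_sub (br : vT -> vT -> vT) (L : {vspace vT}) : Prop :=
  exists k : nat, lcs br L k = 0%VS.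

Definition completely_solvable (br : vT -> vT -> vT) : Prop :=
  nilpotent_sub br (derived br).

Definition sub_superalgebra (g0 g1 : {vspace vT}) (br : vT -> vT -> vT)
    (S : {vspace vT}) : Prop :=
  ((S :&: g0) + (S :&: g1))%VS = S /\
  (forall x y : vT, x \in S -> y \in S -> br x y \in S).

End LieSuper.

From HB Require Import structures.
From mathcomp Require Import all_boot all_order all_algebra zify.
From Stdlib Require Import Classical.

Set Implicit Arguments.
Unset Strict Implicit.
Unset Printing Implicit Defensive.
Import GRing.Theory.
Local Open Scope ring_scope.

(* Let D = [g, g] and let g = C_0 ⊇ C_1 = D ⊇ C_2 ⊇ ... be the lower central
   series of the nilpotent ideal D, preceded by g; it reaches 0.  Take j with
   S + C_j = g but S + C_(j+1) <> g.  It suffices to find a graded S-stable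
   hyperplane W of C_j containing R = C_j ∩ (S + C_(j+1)): since
   [C_j, C_j] ⊆ C_(j+1) ⊆ W, the sum S + W is then a sub-superalgebra, and it
   has codimension one because S ∩ C_j ⊆ W.
   Such a W is reached from R by repeatedly inserting a graded S-stable
   subspace Y strictly between the current X and C_j.  As [D, C_j] ⊆ C_(j+1)
   ⊆ X, the action of S on C_j / X is nearly abelian, and either
   - some odd s ∈ S acts nontrivially: take Y = X + [s, C_j], which misses
     C_j because (ad s)^2 = ad [s, s] / 2 vanishes on C_j / X (here p <> 2);
   - some even a ∈ S does not act by a scalar: take Y = X + (ad a - λ) C_j for
     an eigenvalue λ of ad a on C_j / X (here k is algebraically closed);
   - S acts by scalars: take Y = X + k v for any homogeneous v ∈ C_j \ X. *)

Section LinfunOfLinear.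
Variables (F : fieldType) (aT rT : vectType F) (f : aT -> rT).
Hypothesis f_linear : linear f.

(* [lfunE] needs a canonical linear structure, attached here to a copy of [f]. *)
Let f_copy : aT -> rT := f.
HB.instance Definition _ := GRing.isLinear.Build F aT rT *:%R f_copy f_linear.

Lemma linfun_linearE v : linfun f v = f v.
Proof. exact: (lfunE f_copy). Qed.

End LinfunOfLinear.

Lemma lfun_eigenvector (F : closedFieldType) (vT : vectType F) (f : 'End(vT)) :
  (0 < \dim {:vT})%N -> exists a, exists2 v, v != 0 & f v = a *: v.
Proof.
move=> dim_gt0; set e := vbasis {:vT}; have e_basis : basis_of {:vT} e := vbasisP _.
have [a] : exists a, root (char_poly (passmx.mxof e e f)) a.
  by apply/closed_rootP; rewrite size_char_poly; case: (\dim {:vT}) dim_gt0.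
rewrite -eigenvalue_root_char => f_a.
exists a, (vpick (passmx.leigenspace f a)).
  by rewrite vpick0 (passmx.leigenspaceE e_basis) passmx.vsof_eq0.
apply/eqP; rewrite -subr_eq0.
have := memv_pick (passmx.leigenspace f a).
by rewrite memv_ker add_lfunE opp_lfunE scale_lfunE id_lfunE.
Qed.

Lemma lfun_eigenvector_mod (F : closedFieldType) (vT : vectType F)
    (f : 'End(vT)) (X P : {vspace vT}) :
  (X <= P)%VS -> ~~ (P <= X)%VS ->
  (forall v, v \in P -> f v \in P) -> (forall v, v \in X -> f v \in X) ->
  exists a, exists2 y, y \in P & y \notin X /\ f y - a *: y \in X.
Proof.
move=> XP PnX fP fX; set Q := (P :\: X)%VS; set pi := daddv_pi Q X.
have QX0 : (Q :&: X = 0)%VS := capv_diff P X.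
have QP : (Q <= P)%VS := diffvSl P X.
have QXP : (Q + X = P)%VS by rewrite addv_diff; apply/addv_idPl.
(* [Q] is a copy of [P / X], on which [f] induces [pi \o f]. *)
pose fQ (x : subvs_of Q) := vsproj Q (pi (f (vsval x))).
have fQ_linear : linear fQ by move=> c x y; rewrite /fQ !linearP.
have dimQ_gt0 : (0 < \dim {:subvs_of Q})%N.
  by rewrite dimvf /dim /= lt0n dimv_eq0 diffv_eq0.
have [a [x x_nz fx]] := lfun_eigenvector (linfun fQ) dimQ_gt0.
have xP : vsval x \in P := subvP QP _ (subvsP x).
exists a, (vsval x) => //; split.
  apply: contra x_nz => xX; have : vsval x \in (Q :&: X)%VS by rewrite memv_cap subvsP.
  by rewrite QX0 memv0 => /eqP x0; apply/eqP/subvs_inj.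
have fxQX : f (vsval x) \in (Q + X)%VS by rewrite QXP fP.
have pi_fx : pi (f (vsval x)) = a *: vsval x.
  by have := congr1 vsval fx; rewrite (linfun_linearE fQ_linear) vsprojK ?memv_pi.
by rewrite -{1}(daddv_pi_add QX0 fxQX) -/pi pi_fx addrC addKr memv_pi.
Qed.

Lemma dimv_add_limg_lt (F : fieldType) (vT : vectType F) (g : 'End(vT))
    (X P : {vspace vT}) y :
  (X <= P)%VS -> (forall v, v \in X -> g v \in X) ->
  y \in P -> y \notin X -> g y \in X -> (\dim (X + g @: P) < \dim P)%N.
Proof.
move=> XP gX yP yX gyX; set K := (P :&: g @^-1: X)%VS.
have XK : (X <= K)%VS.
  by apply/subvP => v vX; rewrite memv_cap (subvP XP) // -memv_preim gX.
have ltXK : (\dim X < \dim K)%N.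
  by rewrite (ltn_leqif (dimv_leqif_sup XK)); apply/subvPn; exists y;
    rewrite // memv_cap yP -memv_preim.
have gKX : (g @: K <= X :&: g @: P)%VS.
  rewrite subv_cap limgS ?capvSl // andbT.
  by apply/subvP => _ /memv_imgP [u + ->]; rewrite memv_cap -memv_preim => /andP [].
have := limg_ker_dim g K; have := limg_ker_dim g P.
have := dimv_sum_cap X (g @: P); have := dimvS gKX.
have : (\dim (K :&: lker g) <= \dim (P :&: lker g))%N by apply/dimvS/capvS/subvv/capvSl.
lia.
Qed.

Lemma dimv_add_hyperplane (F : fieldType) (vT : vectType F) (S P W : {vspace vT}) :
  (S + P = fullv)%VS -> (S :&: P <= W)%VS -> (W <= P)%VS ->
  (\dim W + 1 = \dim P)%N -> (\dim (S + W) + 1 = \dim {:vT})%N.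
Proof.
move=> SP SPW WP dimW.
have SW : (S :&: W = S :&: P)%VS.
  by apply/eqP; rewrite eqEsubv capvS //= subv_cap capvSl.
by have := dimv_sum_cap S W; have := dimv_sum_cap S P; rewrite SP SW; lia.
Qed.

Lemma exists_last_true (p : pred nat) n : p 0 -> ~~ p n -> exists j, p j && ~~ p j.+1.
Proof.
move=> p0; elim: n => [|n IH] pn; first by rewrite p0 in pn.
by case pn1 : (p n); [exists n; rewrite pn1 | exact: IH (negbT pn1)].
Qed.

Section LieSuperalgebra.
Variables (F : fieldType) (vT : vectType F) (g0 g1 : {vspace vT}).
Variable br : vT -> vT -> vT.
Hypothesis hL : is_lie_superalgebra g0 g1 br.

Local Notation gpart := (gpart g0 g1).
Local Notation D := (derived br).

Let g0_g1_full : (g0 + g1 = fullv)%VS. Proof. by case: hL => [[]]. Qed.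
Let g0_g1_cap : (g0 :&: g1 = 0)%VS. Proof. by case: hL => [[_ /directv_addP]]. Qed.
Let g1_g0_cap : (g1 :&: g0 = 0)%VS. Proof. by rewrite capvC. Qed.
Let br_linear_l z : linear (br^~ z). Proof. by case: hL => _ hl _ _ _ a x y; apply: hl. Qed.
Let br_linear_r x : linear (br x). Proof. by case: hL => _ _ [hr _] _ _ a y z; apply: hr. Qed.
Let br_parity i j x y : x \in gpart i -> y \in gpart j -> br x y \in gpart (i (+) j).
Proof. by case: hL => _ _ [_ hpar] _ _; apply: hpar. Qed.
Let br_anti i j x y : x \in gpart i -> y \in gpart j ->
  br x y = - (((-1) ^+ (i && j)) *: br y x).
Proof. by case: hL => _ _ _ [hanti _] _; apply: hanti. Qed.
Let br_jacobi i j k x y z : x \in gpart i -> y \in gpart j -> z \in gpart k ->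
  br x (br y z) = br (br x y) z + ((-1) ^+ (i && j)) *: br y (br x z).
Proof. by case: hL => _ _ _ [_ hjac] _; apply: hjac. Qed.

Definition ad x : 'End(vT) := linfun (br x).
Definition adr z : 'End(vT) := linfun (br^~ z).

Lemma adE x v : ad x v = br x v. Proof. exact: linfun_linearE (br_linear_r x) v. Qed.
Lemma adrE z v : adr z v = br v z. Proof. exact: linfun_linearE (br_linear_l z) v. Qed.

Lemma br0l z : br 0 z = 0. Proof. by rewrite -adrE linear0. Qed.
Lemma br0r x : br x 0 = 0. Proof. by rewrite -adE linear0. Qed.
Lemma brDl x y z : br (x + y) z = br x z + br y z. Proof. by rewrite -!adrE linearD. Qed.
Lemma brDr x y z : br x (y + z) = br x y + br x z. Proof. by rewrite -!adE linearD. Qed.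
Lemma brBr x y z : br x (y - z) = br x y - br x z. Proof. by rewrite -!adE linearB. Qed.
Lemma brZr a x y : br x (a *: y) = a *: br x y. Proof. by rewrite -!adE linearZ. Qed.

Definition pr0 : 'End(vT) := daddv_pi g0 g1.
Definition pr1 : 'End(vT) := daddv_pi g1 g0.

Lemma pr_add v : pr0 v + pr1 v = v.
Proof. by apply: daddv_pi_add; rewrite ?g0_g1_full ?memvf. Qed.

Lemma pr0_mem v : pr0 v \in g0. Proof. exact: memv_pi. Qed.
Lemma pr1_mem v : pr1 v \in g1. Proof. exact: memv_pi. Qed.
Lemma pr0_even v : v \in g0 -> pr0 v = v. Proof. exact: daddv_pi_id g0_g1_cap. Qed.
Lemma pr1_odd v : v \in g1 -> pr1 v = v. Proof. exact: daddv_pi_id g1_g0_cap. Qed.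

Lemma pr0_odd v : v \in g1 -> pr0 v = 0.
Proof. by move=> v1; apply: (addIr (pr1 v)); rewrite pr_add add0r pr1_odd. Qed.

Lemma pr0_gpart b v : v \in gpart b -> pr0 v \in <[v]>%VS.
Proof. by case: b => /= vb; [rewrite pr0_odd // mem0v | rewrite pr0_even // memv_line]. Qed.

Lemma pr0_br_even a q : a \in g0 -> pr0 (br a q) = br a (pr0 q).
Proof.
move=> a0; rewrite -{1}(pr_add q) brDr linearD /=.
rewrite (pr0_even (@br_parity false false _ _ a0 (pr0_mem q))).
by rewrite (pr0_odd (@br_parity false true _ _ a0 (pr1_mem q))) addr0.
Qed.

Lemma pr0_br_odd s q : s \in g1 -> pr0 (br s q) = br s (pr1 q).
Proof.
move=> s1; rewrite -{1}(pr_add q) brDr linearD /=.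
rewrite (pr0_odd (@br_parity true false _ _ s1 (pr0_mem q))).
by rewrite (pr0_even (@br_parity true true _ _ s1 (pr1_mem q))) add0r.
Qed.

Definition graded (V : {vspace vT}) := forall v, v \in V -> pr0 v \in V.

Lemma graded_pr1 V v : graded V -> v \in V -> pr1 v \in V.
Proof. by move=> grV vV; rewrite -(addKr (pr0 v) (pr1 v)) pr_add rpredD ?rpredN ?grV. Qed.

Lemma gradedP V : graded V <-> ((V :&: g0) + (V :&: g1) = V)%VS.
Proof.
split=> [grV | VE v].
  apply/eqP; rewrite eqEsubv subv_add !capvSl /=; apply/subvP => v vV.
  by rewrite -(pr_add v) memv_add // memv_cap ?pr0_mem ?pr1_mem ?grV ?graded_pr1.
rewrite -{1}VE => /memv_addP [u + [w + ->]]; rewrite !memv_cap => /andP [uV u0] /andP [wV w1].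
by rewrite linearD /= pr0_even // pr0_odd // addr0.
Qed.

Lemma gradedD U V : graded U -> graded V -> graded (U + V)%VS.
Proof. by move=> grU grV _ /memv_addP [u uU [v vV ->]]; rewrite linearD memv_add ?grU ?grV. Qed.

Lemma gradedI U V : graded U -> graded V -> graded (U :&: V)%VS.
Proof. by move=> grU grV v; rewrite !memv_cap => /andP [uV vV]; rewrite grU ?grV. Qed.

Lemma graded_full : graded fullv. Proof. by move=> v _; apply: memvf. Qed.

Lemma graded_line b v : v \in gpart b -> graded <[v]>%VS.
Proof. by move=> vb _ /vlineP [k ->]; rewrite linearZ rpredZ // (pr0_gpart vb). Qed.

Lemma graded_homog_notin P X : graded P -> ~~ (P <= X)%VS ->
  exists b v, [/\ v \in P, v \notin X & v \in gpart b].
Proof.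
move=> grP /subvPn [p pP pX]; have [p0X | p0X] := boolP (pr0 p \in X).
  exists true, (pr1 p); split; [exact: graded_pr1 | | exact: pr1_mem].
  by apply: contra pX => p1X; rewrite -(pr_add p) rpredD.
by exists false, (pr0 p); split; [exact: grP | | exact: pr0_mem].
Qed.

Lemma br_mem_homog (A B Z : {vspace vT}) : graded A -> graded B ->
  (forall i j x y, x \in A -> y \in B -> x \in gpart i -> y \in gpart j -> br x y \in Z) ->
  forall x y, x \in A -> y \in B -> br x y \in Z.
Proof.
move=> grA grB brZ x y xA yB; rewrite -(pr_add x) -(pr_add y) !brDl !brDr.
have [x0A x1A] := (grA x xA, graded_pr1 grA xA).
have [y0B y1B] := (grB y yB, graded_pr1 grB yB).
by apply: rpredD; apply: rpredD; [apply: (brZ false false) | apply: (brZ false true)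
  | apply: (brZ true false) | apply: (brZ true true)]; rewrite ?pr0_mem ?pr1_mem.
Qed.

Lemma mem_brs (A B : {vspace vT}) x y : x \in A -> y \in B -> br x y \in brs br A B.
Proof.
move=> xA yB; rewrite (coord_vbasis xA) (coord_vbasis yB) -adrE linear_sum rpred_sum // => i _.
rewrite linearZ rpredZ //= adrE -adE linear_sum rpred_sum // => j _.
by rewrite linearZ rpredZ //= adE; apply/memv_span/allpairs_f; rewrite mem_nth ?size_tuple.
Qed.

Lemma brs_sub (A B C : {vspace vT}) :
  (forall x y, x \in A -> y \in B -> br x y \in C) -> (brs br A B <= C)%VS.
Proof.
move=> brC; apply/span_subvP => _ /allpairsP [[x y] [/= xA yB ->]].
by apply: brC; apply: vbasis_mem.
Qed.

Lemma graded_brs A B : graded A -> graded B -> graded (brs br A B).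
Proof.
move=> grA grB; suff /subvP sub_pre : (brs br A B <= pr0 @^-1: brs br A B)%VS.
  by move=> v /sub_pre; rewrite memv_preim.
apply: brs_sub; apply: br_mem_homog => // i j x y xA yB xi yj.
have /subvP line_sub : (<[br x y]> <= brs br A B)%VS by rewrite -memvE mem_brs.
by rewrite -memv_preim line_sub // (pr0_gpart (br_parity xi yj)).
Qed.

Lemma jacobi_homog i s t q : s \in gpart i ->
  br t (br s q) = br (br t s) q + br s (br (pr0 t) q) + (-1) ^+ i *: br s (br (pr1 t) q).
Proof.
move=> si; have jacobi_q c q' : q' \in gpart c -> br t (br s q') =
    br (br t s) q' + br s (br (pr0 t) q') + (-1) ^+ i *: br s (br (pr1 t) q').
  move=> q'c; rewrite -{1 2}(pr_add t) !brDl.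
  rewrite (@br_jacobi false i c _ _ _ (pr0_mem t) si q'c)
    (@br_jacobi true i c _ _ _ (pr1_mem t) si q'c) /= expr0 scale1r.
  by rewrite -!addrA; congr (_ + _); rewrite addrCA.
rewrite -(pr_add q) !brDr scalerDr (jacobi_q false (pr0 q)) ?pr0_mem //.
by rewrite (jacobi_q true (pr1 q)) ?pr1_mem // addrACA [X in X + _]addrACA.
Qed.

Lemma jacobi_even a t q : a \in g0 -> br t (br a q) = br (br t a) q + br a (br t q).
Proof.
by move=> a0; rewrite (@jacobi_homog false a) //= expr0 scale1r -addrA -brDr -brDl pr_add.
Qed.

Lemma br_odd_twice s q : s \in g1 -> 2%:R *: br s (br s q) = br (br s s) q.
Proof.
move=> s1; have := @jacobi_homog true s s q s1.
rewrite pr0_odd // pr1_odd // br0l br0r addr0 /= expr1 scaleN1r => sq.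
by rewrite scaler_nat mulr2n {1}sq subrK.
Qed.

Definition ideal (V : {vspace vT}) := forall x y, y \in V -> br x y \in V.

Lemma mem_derived x y : br x y \in D. Proof. exact: mem_brs (memvf x) (memvf y). Qed.

Lemma graded_derived : graded D. Proof. exact: graded_brs graded_full graded_full. Qed.

Lemma lcsS L j : lcs br L j.+1 = brs br L (lcs br L j). Proof. exact: iterS. Qed.

Lemma graded_lcs j : graded (lcs br D j).
Proof.
by elim: j => [|j IH]; [apply: graded_derived | rewrite lcsS; apply: graded_brs graded_derived IH].
Qed.

Lemma ideal_lcs j : ideal (lcs br D j).
Proof.
elim: j => [|j IH] x; first by move=> y _; apply: mem_derived.
suff /subvP sub_pre : (lcs br D j.+1 <= ad x @^-1: lcs br D j.+1)%VS.
  by move=> y /sub_pre; rewrite -memv_preim adE.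
rewrite lcsS; apply: brs_sub; apply: br_mem_homog; [exact: graded_derived | exact: graded_lcs |].
move=> i _ d l dD lL di _; rewrite -memv_preim adE (jacobi_homog x l di).
by rewrite !rpredD ?rpredZ // mem_brs ?mem_derived ?IH.
Qed.

Lemma lcs_decr j : (lcs br D j.+1 <= lcs br D j)%VS.
Proof. by rewrite lcsS; apply: brs_sub => x y _; apply: ideal_lcs. Qed.

Lemma lcs_sub_derived j : (lcs br D j <= D)%VS.
Proof. by elim: j => [|j IH]; [apply: subvv | apply: subv_trans (lcs_decr j) IH]. Qed.

Definition dfilt j := if j is j'.+1 then lcs br D j' else fullv.

Lemma graded_dfilt j : graded (dfilt j).
Proof. by case: j => [|j]; [apply: graded_full | apply: graded_lcs]. Qed.

Lemma ideal_dfilt j : ideal (dfilt j).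
Proof. by case: j => [|j]; [move=> x y _; apply: memvf | apply: ideal_lcs]. Qed.

Lemma dfilt_decr j : (dfilt j.+1 <= dfilt j)%VS.
Proof. by case: j => [|j]; [apply: subvf | apply: lcs_decr]. Qed.

Lemma dfilt_br_derived j d y : d \in D -> y \in dfilt j -> br d y \in dfilt j.+1.
Proof. by case: j => [|j] dD yj; [apply: mem_derived | rewrite /dfilt lcsS mem_brs]. Qed.

Lemma dfilt_br j x y : x \in dfilt j -> y \in dfilt j -> br x y \in dfilt j.+1.
Proof.
case: j => [|j] xj yj; first exact: mem_derived.
by apply: dfilt_br_derived yj; apply: subvP (lcs_sub_derived j) _ xj.
Qed.

Definition stable (S X : {vspace vT}) := forall s x, s \in S -> x \in X -> br s x \in X.

Lemma stable_br_right S W : graded S -> graded W -> stable S W ->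
  forall w s, w \in W -> s \in S -> br w s \in W.
Proof.
move=> grS grW stW; apply: br_mem_homog => // i j w s wW sS wi sj.
by rewrite (br_anti wi sj) rpredN rpredZ // stW.
Qed.

Lemma stable_cap_add (S P N : {vspace vT}) : (forall x y, x \in S -> y \in S -> br x y \in S) ->
  ideal P -> ideal N -> stable S (P :&: (S + N)).
Proof.
move=> brS idP idN s x sS /memv_capP [xP /memv_addP [u uS [n nN ux]]].
rewrite memv_cap (idP _ _ xP) ux brDr.
exact: memv_add (brS _ _ sS uS) (idN _ _ nN).
Qed.

Lemma sub_superalgebra_addv S W : sub_superalgebra g0 g1 br S -> graded W ->
  stable S W -> (forall w w', w \in W -> w' \in W -> br w w' \in W) ->
  sub_superalgebra g0 g1 br (S + W).
Proof.
case=> /gradedP grS brS grW stW brW; split; first by apply/gradedP/gradedD.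
move=> _ _ /memv_addP [s sS [w wW ->]] /memv_addP [s' s'S [w' w'W ->]].
rewrite !brDl !brDr -addrA memv_add ?brS //.
have ws' : br w s' \in W := stable_br_right grS grW stW wW s'S.
exact: rpredD (stW _ _ sS w'W) (rpredD ws' (brW _ _ wW w'W)).
Qed.

Section Intermediate.
Variables (S P N X : {vspace vT}).
Hypotheses (grP : graded P) (idealP : ideal P).
Hypothesis DPN : forall d y, d \in D -> y \in P -> br d y \in N.
Hypotheses (grX : graded X) (stX : stable S X) (NX : (N <= X)%VS) (XP : (X <= P)%VS).

Definition intermediate (Y : {vspace vT}) :=
  [/\ graded Y, stable S Y, (X <= Y)%VS, (Y <= P)%VS & (\dim X < \dim Y < \dim P)%N].

Definition acts_by_scalar s := exists l : F, forall q, q \in P -> br s q - l *: q \in X.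

Let NX_br d y : d \in D -> y \in P -> br d y \in X.
Proof. by move=> dD yP; apply: subvP NX _ (DPN dD yP). Qed.

Lemma intermediate_odd s p : (2%:R : F) != 0 -> s \in S -> s \in g1 ->
  p \in P -> br s p \notin X -> intermediate (X + ad s @: P)%VS.
Proof.
move=> two_nz sS s1 pP spX; set Y := (X + ad s @: P)%VS.
have /subvP XY : (X <= Y)%VS := addvSl _ _.
have sPY q : q \in P -> br s q \in Y.
  by move=> qP; rewrite -adE (subvP (addvSr _ _)) ?memv_img.
have YP : (Y <= P)%VS.
  by rewrite subv_add XP; apply/subvP => _ /memv_imgP [q qP ->]; rewrite adE idealP.
(* [ad s] maps [Y] into [X], since [(ad s)^2 = ad [s, s] / 2] maps [P] into [N]. *)
have sYX y : y \in Y -> br s y \in X.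
  case/memv_addP => x xX [_ /memv_imgP [q qP ->] ->]; rewrite adE brDr.
  apply: rpredD (stX sS xX) _.
  rewrite -[br s _]scale1r -(mulVf two_nz) -scalerA br_odd_twice //.
  exact: rpredZ (NX_br (mem_derived _ _) qP).
split => //.
- apply: gradedD grX _ => _ /memv_imgP [q qP ->].
  by rewrite adE pr0_br_odd // -adE memv_img // graded_pr1.
- move=> t _ tS /memv_addP [x xX [_ /memv_imgP [q qP ->] ->]].
  rewrite adE brDr; apply: rpredD (XY _ (stX tS xX)) _.
  rewrite (@jacobi_homog true s) // -addrA.
  apply: rpredD; first exact: XY _ (NX_br (mem_derived _ _) qP).
  by apply: rpredD; [|apply: rpredZ]; apply: sPY; apply: idealP.
- exact: addvSl.
rewrite (ltn_leqif (dimv_leqif_sup (addvSl _ _))) (ltn_leqif (dimv_leqif_sup YP)).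
apply/andP; split; apply/subvPn; first by exists (br s p); rewrite ?sPY.
by exists p => //; apply: contra spX; apply: sYX.
Qed.

Lemma intermediate_even a l y : a \in S -> a \in g0 -> ~ acts_by_scalar a ->
  y \in P -> y \notin X -> br a y - l *: y \in X ->
  intermediate (X + (ad a - l *: \1)%VF @: P)%VS.
Proof.
move=> aS a0 a_nscalar yP yX ayX.
set g := (ad a - l *: \1)%VF; set Y := (X + g @: P)%VS.
have gE v : g v = br a v - l *: v.
  by rewrite add_lfunE opp_lfunE scale_lfunE id_lfunE adE.
have /subvP XY : (X <= Y)%VS := addvSl _ _.
have gPY q : q \in P -> g q \in Y by move=> qP; rewrite (subvP (addvSr _ _)) ?memv_img.
have gX v : v \in X -> g v \in X by move=> vX; rewrite gE rpredB ?rpredZ ?stX.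
have YP : (Y <= P)%VS.
  rewrite subv_add XP; apply/subvP => _ /memv_imgP [q qP ->].
  by rewrite gE rpredB ?rpredZ ?idealP.
have [p pP gpX] : exists2 p, p \in P & g p \notin X.
  apply: NNPP => g_in; apply: a_nscalar; exists l => q qP; rewrite -gE.
  by apply: NNPP => /negP gqX; apply: g_in; exists q.
split => //.
- apply: gradedD grX _ => _ /memv_imgP [q qP ->].
  by rewrite gE linearB linearZ /= pr0_br_even // -gE memv_img ?grP.
- move=> t _ tS /memv_addP [x xX [_ /memv_imgP [q qP ->] ->]].
  rewrite brDr; have -> : br t (g q) = br (br t a) q + g (br t q).
    by rewrite !gE brBr brZr jacobi_even // addrA.
  apply: rpredD (XY _ (stX tS xX)) (rpredD _ (gPY _ (idealP _ qP))).
  exact: XY _ (NX_br (mem_derived _ _) qP).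
- exact: addvSl.
rewrite (ltn_leqif (dimv_leqif_sup (addvSl _ _))); apply/andP; split.
  by apply/subvPn; exists (g p); rewrite ?gPY.
by apply: dimv_add_limg_lt XP gX yP yX _; rewrite gE.
Qed.

Lemma intermediate_line b v : v \in P -> v \notin X -> v \in gpart b ->
  (\dim X + 1 < \dim P)%N -> (forall s, s \in S -> acts_by_scalar s) ->
  intermediate (X + <[v]>)%VS.
Proof.
move=> vP vX vb ltXP scalar; set Y := (X + <[v]>)%VS.
have /subvP XY : (X <= Y)%VS := addvSl _ _.
have vY : v \in Y by rewrite (subvP (addvSr _ _)) ?memv_line.
split => //.
- exact: gradedD grX (graded_line vb).
- move=> s _ sS /memv_addP [x xX [_ /vlineP [k ->] ->]]; have [l sl] := scalar s sS.
  rewrite brDr brZr -[br s v](subrK (l *: v)) scalerDr.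
  apply: rpredD; first exact: XY _ (stX sS xX).
  by apply: rpredD; apply: rpredZ; [apply/XY/sl | apply: rpredZ].
- exact: addvSl.
- by rewrite subv_add XP -memvE.
rewrite (ltn_leqif (dimv_leqif_sup (addvSl _ _))); apply/andP; split.
  by apply/subvPn; exists v.
have := (dimv_add_leqif X <[v]>).1; rewrite -/Y dim_vline; have := leq_b1 (v != 0); lia.
Qed.

End Intermediate.

End LieSuperalgebra.

Section StableHyperplane.
Variables (F : closedFieldType) (vT : vectType F) (g0 g1 : {vspace vT}).
Variable br : vT -> vT -> vT.
Hypotheses (hL : is_lie_superalgebra g0 g1 br) (two_nz : (2%:R : F) != 0).
Variables (S P N : {vspace vT}).
Hypotheses (grS : graded g0 g1 S) (grP : graded g0 g1 P) (idealP : ideal br P).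
Hypothesis DPN : forall d y, d \in derived br -> y \in P -> br d y \in N.

Local Notation graded := (graded g0 g1).
Local Notation stable := (stable br S).
Local Notation acts_by_scalar := (acts_by_scalar br P).

Lemma exists_intermediate X : graded X -> stable X -> (N <= X)%VS -> (X <= P)%VS ->
  (\dim X + 1 < \dim P)%N -> exists Y, intermediate g0 g1 br S P X Y.
Proof.
move=> grX stX NX XP ltXP.
have PnX : ~~ (P <= X)%VS by rewrite -(ltn_leqif (dimv_leqif_sup XP)); lia.
have [[s [p [sS s1 pP spX]]] | odd_in] :=
  classic (exists s p, [/\ s \in S, s \in g1, p \in P & br s p \notin X]).
  by eexists; apply: (intermediate_odd hL grP idealP DPN grX stX NX XP two_nz) spX.
have [[a [aS a0 a_nscalar]] | even_scalar] :=
  classic (exists a, [/\ a \in S, a \in g0 & ~ acts_by_scalar X a]).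
  have adP q : q \in P -> ad br a q \in P by rewrite (adE hL); apply: idealP.
  have adX q : q \in X -> ad br a q \in X by rewrite (adE hL); apply: stX.
  have [l [y yP [yX]]] := lfun_eigenvector_mod XP PnX adP adX; rewrite (adE hL) => ayX.
  eexists; apply: (intermediate_even hL grP idealP DPN grX stX NX XP) ayX => //.
have [b [v [vP vX vb]]] := graded_homog_notin hL grP PnX.
eexists; apply: (intermediate_line hL grX stX NX XP vP vX vb ltXP) => s sS.
have [l sl] : acts_by_scalar X (pr0 g0 g1 s).
  by apply: NNPP => h; apply: even_scalar; exists (pr0 g0 g1 s); rewrite pr0_mem grS.
exists l => q qP; rewrite -[s](pr_add hL) (brDl hL) addrAC rpredD ?sl //.
apply: NNPP => /negP h; apply: odd_in; exists (pr1 g0 g1 s), q.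
by split; [exact: (graded_pr1 hL grS sS) | exact: pr1_mem | |].
Qed.

Lemma exists_stable_hyperplane X : graded X -> stable X -> (N <= X)%VS -> (X <= P)%VS ->
  (\dim X < \dim P)%N ->
  exists W, [/\ graded W, stable W, (X <= W)%VS, (W <= P)%VS & (\dim W + 1 = \dim P)%N].
Proof.
have [n] := ubnP (\dim P - \dim X); elim: n X => // n IH X ltPXn grX stX NX XP ltXP.
have [dimX | ltX1P] := eqVneq (\dim X + 1)%N (\dim P); first by exists X.
have [Y [grY stY XY YP /andP [ltXY ltYP]]] := exists_intermediate grX stX NX XP ltac:(lia).
have [W [grW stW YW WP dimW]] := IH Y ltac:(lia) grY stY (subv_trans NX XY) YP ltYP.
by exists W; split=> //; apply: subv_trans XY YW.
Qed.

End StableHyperplane.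

Lemma exists_codim1_sub_superalgebra (F : closedFieldType) (vT : vectType F)
    (g0 g1 : {vspace vT}) (br : vT -> vT -> vT) (S : {vspace vT}) :
  is_lie_superalgebra g0 g1 br -> (2%:R : F) != 0 -> completely_solvable br ->
  sub_superalgebra g0 g1 br S -> S != fullv ->
  exists2 T, sub_superalgebra g0 g1 br T & (S <= T)%VS /\ (\dim T + 1 = \dim {:vT})%N.
Proof.
move=> hL two_nz [k lcs_k0] hS S_proper; have grS := (gradedP hL S).2 hS.1.
have [j /andP [/eqP SPfull SNfull]] :
    exists j, (S + dfilt br j == fullv)%VS && ~~ (S + dfilt br j.+1 == fullv)%VS.
  by apply: (@exists_last_true (fun j => S + dfilt br j == fullv)%VS k.+1);
    rewrite /= ?addvf ?lcs_k0 ?addv0.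
set P := dfilt br j; set N := dfilt br j.+1; set R := (P :&: (S + N))%VS.
have grP : graded g0 g1 P := graded_dfilt hL (j := j).
have [W [grW stW RW WP dimW]] :
    exists W, [/\ graded g0 g1 W, stable br S W, (R <= W)%VS, (W <= P)%VS
                & (\dim W + 1 = \dim P)%N].
  apply: (exists_stable_hyperplane hL two_nz grS grP (ideal_dfilt hL (j := j))
    (dfilt_br_derived hL (j := j))).
  - exact: gradedI grP (gradedD grS (graded_dfilt hL (j := j.+1))).
  - exact: (stable_cap_add hL hS.2 (ideal_dfilt hL (j := j)) (ideal_dfilt hL (j := j.+1))).
  - by rewrite subv_cap (dfilt_decr hL) addvSr.
  - exact: capvSl.
  rewrite (ltn_leqif (dimv_leqif_sup (capvSl _ _))); apply: contra SNfull => PR.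
  by rewrite eqEsubv subvf -SPfull subv_add addvSl (subv_trans PR) // capvSr.
have SPR : (S :&: P <= R)%VS by rewrite subv_cap capvSr (subv_trans (capvSl _ _)) ?addvSl.
exists (S + W)%VS; last split; first apply: (sub_superalgebra_addv hL hS grW stW).
- move=> w w' /(subvP WP) wP /(subvP WP) w'P; apply: (subvP RW).
  rewrite memv_cap (ideal_dfilt hL w w'P).
  exact: subvP (addvSr S N) _ (dfilt_br hL wP w'P).
- exact: addvSl.
- exact: dimv_add_hyperplane SPfull (subv_trans SPR RW) WP dimW.
Qed.

Theorem lemma5p1 (F : closedFieldType) (p : nat)
    (charFp : p \in [pchar F]) (p_gt2 : (2 < p)%N)
    (vT : vectType F) (g0 g1 : {vspace vT}) (br : vT -> vT -> vT)
    (hLie : is_lie_superalgebra g0 g1 br)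
    (hcs : completely_solvable br)
    (S : {vspace vT}) (hS : sub_superalgebra g0 g1 br S)
    (hproper : S != fullv) :
  exists2 T : {vspace vT}, sub_superalgebra g0 g1 br T &
    (S <= T)%VS /\ (\dim T + 1)%N = \dim (fullv : {vspace vT}).
Proof.
have two_nz : (2%:R : F) != 0.
  by rewrite -(dvdn_pcharf charFp); apply: contraTN p_gt2 => /dvdn_leq; lia.
exact: exists_codim1_sub_superalgebra.
Qed.
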